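(* Let $N\ge 1$ be an integer and let $\lambda,\mu,B_1,B_2>0$ with $B_1<B_2$ and $\lambda\mu<B_1+NB_2$. Put $\beta=\frac{B_1}{NB_2}$ (so that $\sqrt{\beta N}=\sqrt{B_1/B_2}$). For $\alpha\in[0,1]$ satisfying the stability constraints $\alpha\lambda<B_1/\mu$ and $(1-\alpha)\lambda/N<B_2/\mu$, define the average system delay of the non-aggregated system $$D(\alpha)=\alpha\,\frac{1}{B_1/\mu-\alpha\lambda}+(1-\alpha)\,\frac{1}{B_2/\mu-(1-\alpha)\lambda/N}.$$ Then the minimum of $D$ over all feasible $\alpha$ is $$D_{\min,\mathrm{non\text{-}agg}}=\begin{cases}\dfrac{\mu N}{B_2N-\lambda\mu}, & \text{if } \dfrac{B_2N}{\lambda\mu}\bigl(1-\sqrt{\beta N}\bigr)\ge 1,\\[3mm] \dfrac{\lambda\mu(1+N)-B_2N\bigl(1-\sqrt{\beta N}\bigr)^2}{\lambda\,[B_2N(\beta+1)-\lambda\mu]}, & \text{otherwise.}\end{cases}$$ In the first case the minimizer is $\alpha_{opt}=0$; in the second case it is $$\alpha_{opt}=\frac{\lambda\mu\sqrt{\beta}/(B_2N)+\sqrt{\beta}\,(\sqrt{\beta N}-1)}{\lambda\mu(\sqrt{\beta}+\sqrt{N})/(B_2N)}.$$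
   Context: Non-aggregated hybrid WiFi–VLC system: one WiFi access point of downlink capacity $B_1$ and $N$ VLC access points each of downlink capacity $B_2$. Requests arrive as a Poisson process of rate $\lambda$; request sizes are i.i.d. exponential with mean $\mu$. Each request is sent, independently at random, entirely to the WiFi queue with probability $\alpha$, or otherwise entirely to one of the $N$ VLC queues chosen uniformly at random. Thus the WiFi queue is an M/M/1 queue with arrival rate $\alpha\lambda$ and service rate $B_1/\mu$, and each VLC queue is an M/M/1 queue with arrival rate $(1-\alpha)\lambda/N$ and service rate $B_2/\mu$; a request's system delay is its stationary sojourn time (arrival until fully served) in the queue it joins, so the average system delay is $D(\alpha)=\alpha D_{WiFi}+(1-\alpha)D_{VLC}$ with $D_{WiFi},D_{VLC}$ the M/M/1 mean sojourn times, which gives the formula in the claim. *)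

From Stdlib Require Import Reals Lra.
Open Scope R_scope.

Definition D (N : nat) (lam mu B1 B2 alpha : R) : R :=
  alpha * (1 / (B1 / mu - alpha * lam))
  + (1 - alpha) * (1 / (B2 / mu - (1 - alpha) * lam / INR N)).

Definition feasible (N : nat) (lam mu B1 B2 alpha : R) : Prop :=
  0 <= alpha <= 1 /\ alpha * lam < B1 / mu /\ (1 - alpha) * lam / INR N < B2 / mu.

Definition beta (N : nat) (B1 B2 : R) : R := B1 / (INR N * B2).

Definition case1 (N : nat) (lam mu B1 B2 : R) : Prop :=
  (B2 * INR N) / (lam * mu) * (1 - sqrt (beta N B1 B2 * INR N)) >= 1.

Definition Dmin_case1 (N : nat) (lam mu B1 B2 : R) : R :=
  mu * INR N / (B2 * INR N - lam * mu).

Definition Dmin_case2 (N : nat) (lam mu B1 B2 : R) : R :=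
  let b := beta N B1 B2 in
  (lam * mu * (1 + INR N) - B2 * INR N * (1 - sqrt (b * INR N)) ^ 2)
  / (lam * (B2 * INR N * (b + 1) - lam * mu)).

Definition alpha_opt_case2 (N : nat) (lam mu B1 B2 : R) : R :=
  let b := beta N B1 B2 in
  (lam * mu * sqrt b / (B2 * INR N) + sqrt b * (sqrt (b * INR N) - 1))
  / (lam * mu * (sqrt b + sqrt (INR N)) / (B2 * INR N)).

Definition is_min_at (N : nat) (lam mu B1 B2 a m : R) : Prop :=
  feasible N lam mu B1 B2 a /\ D N lam mu B1 B2 a = m /\
  (forall alpha, feasible N lam mu B1 B2 alpha -> m <= D N lam mu B1 B2 alpha).

From Stdlib Require Import Reals Lra Psatz.
Open Scope R_scope.

(* Write B1 = p^2, B2 = q^2 and measure the stability margins of the two queues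
   by U = B1 - alpha lam mu and V = B2 - (1 - alpha) lam mu / N.  Then
   lam D = B1/U + N B2/V - 1 - N, and U + N V = B1 + N B2 - lam mu is independent
   of alpha, so alpha only moves (U, V) along a line.  By the Engel form of
   Cauchy-Schwarz, B1/U + N B2/V >= (p + N q)^2 / (U + N V), with equality iff
   U : V = p : q.  When the first-case condition fails that point has alpha >= 0 and
   is alpha_opt.  Otherwise it lies at alpha <= 0; the objective increases along the
   line away from it, so alpha = 0 is optimal. *)

Lemma cauchy_schwarz_engel (n a b U V : R) :
  0 < n -> 0 < U -> 0 < V ->
  (a + n * b) ^ 2 / (U + n * V) <= a ^ 2 / U + n * (b ^ 2 / V).
Proof.
  intros Hn HU HV.
  assert (HW : 0 < U + n * V) by nra.
  assert (Hgap : a ^ 2 / U + n * (b ^ 2 / V) - (a + n * b) ^ 2 / (U + n * V)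
                 = n * (a * V - b * U) ^ 2 / (U * V * (U + n * V)))
    by (field; repeat split; nra).
  assert (0 <= n * (a * V - b * U) ^ 2 / (U * V * (U + n * V))).
  { apply Rmult_le_pos; [apply Rmult_le_pos; [lra | apply pow2_ge_0] |].
    apply Rlt_le, Rinv_0_lt_compat; repeat apply Rmult_lt_0_compat; lra. }
  lra.
Qed.

(* On the line U + n V = const, a^2/U + n b^2/V is minimal at U : V = a : b;
   [b * U0 <= a * V0] puts (U0, V0) on the side of smaller U, where it decreases in U. *)
Lemma engel_sum_decreasing (n a b U V U0 V0 : R) :
  0 < n -> 0 <= a -> 0 <= b -> 0 < U -> 0 < V0 ->
  U <= U0 -> U + n * V = U0 + n * V0 -> b * U0 <= a * V0 ->
  a ^ 2 / U0 + n * (b ^ 2 / V0) <= a ^ 2 / U + n * (b ^ 2 / V).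
Proof.
  intros Hn Ha Hb HU HV0 HUU0 Hline Hleft.
  assert (HVV0 : V0 <= V) by nra.
  assert (HV : 0 < V) by lra.
  assert (EU0 : U0 = U + n * (V - V0)) by lra.
  subst U0.
  assert (HU0 : 0 < U + n * (V - V0)) by lra.
  assert (Hprod : b * U * (b * (U + n * (V - V0))) <= a * V * (a * V0)).
  { apply Rmult_le_compat; nra. }
  assert (Hgap : a ^ 2 / U + n * (b ^ 2 / V) - (a ^ 2 / (U + n * (V - V0)) + n * (b ^ 2 / V0))
                 = n * (V - V0) * (a ^ 2 * V * V0 - b ^ 2 * U * (U + n * (V - V0)))
                   / (U * (U + n * (V - V0)) * V * V0))
    by (field; repeat split; nra).
  assert (0 <= n * (V - V0) * (a ^ 2 * V * V0 - b ^ 2 * U * (U + n * (V - V0)))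
               / (U * (U + n * (V - V0)) * V * V0)).
  { apply Rmult_le_pos; [apply Rmult_le_pos; nra |].
    apply Rlt_le, Rinv_0_lt_compat; repeat apply Rmult_lt_0_compat; lra. }
  lra.
Qed.

(* mu times (service rate - arrival rate) of the WiFi queue and of each VLC queue *)
Definition wifi_margin (lam mu B1 alpha : R) : R := B1 - alpha * lam * mu.
Definition vlc_margin (N : nat) (lam mu B2 alpha : R) : R := B2 - (1 - alpha) * lam * mu / INR N.

Lemma margins_sum (N : nat) (lam mu B1 B2 alpha : R) : 0 < INR N ->
  wifi_margin lam mu B1 alpha + INR N * vlc_margin N lam mu B2 alpha
  = B1 + INR N * B2 - lam * mu.
Proof. intros Hn. unfold wifi_margin, vlc_margin. field. lra. Qed.

Lemma feasible_iff_margins (N : nat) (lam mu B1 B2 alpha : R) :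
  0 < lam -> 0 < mu -> 0 < INR N ->
  feasible N lam mu B1 B2 alpha <->
  (0 < wifi_margin lam mu B1 alpha <= B1 /\ 0 < vlc_margin N lam mu B2 alpha <= B2).
Proof.
  intros Hlam Hmu Hn.
  assert (Hlm : 0 < lam * mu) by nra.
  assert (Hc : 0 < lam * mu / INR N) by (apply Rdiv_lt_0_compat; lra).
  assert (Hscale : forall x B, x < B / mu <-> x * mu < B).
  { intros x B. replace B with (B / mu * mu) at 2 by (field; lra).
    split; intros H; [apply Rmult_lt_compat_r | apply Rmult_lt_reg_r in H]; lra. }
  unfold feasible, wifi_margin, vlc_margin.
  rewrite !Hscale.
  replace ((1 - alpha) * lam / INR N * mu) with ((1 - alpha) * (lam * mu / INR N))
    by (field; lra).
  replace ((1 - alpha) * lam * mu / INR N) with ((1 - alpha) * (lam * mu / INR N))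
    by (field; lra).
  rewrite Rmult_assoc.
  split; intros H; intuition nra.
Qed.

Lemma D_margins (N : nat) (lam mu B1 B2 alpha : R) :
  0 < lam -> 0 < mu -> 0 < INR N ->
  wifi_margin lam mu B1 alpha <> 0 -> vlc_margin N lam mu B2 alpha <> 0 ->
  D N lam mu B1 B2 alpha
  = (B1 / wifi_margin lam mu B1 alpha
     + INR N * (B2 / vlc_margin N lam mu B2 alpha) - 1 - INR N) / lam.
Proof.
  unfold D, wifi_margin, vlc_margin. intros Hlam Hmu Hn HU HV.
  assert (HVn : B2 * INR N - (1 - alpha) * lam * mu <> 0).
  { replace (B2 * INR N - (1 - alpha) * lam * mu)
      with (INR N * (B2 - (1 - alpha) * lam * mu / INR N)) by (field; repeat split; lra).
    apply Rmult_integral_contrapositive_currified; lra. }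
  field; repeat split; lra.
Qed.

Section SquareCapacities.

Variables (N : nat) (lam mu p q : R).
Hypotheses (Hlam : 0 < lam) (Hmu : 0 < mu) (Hp : 0 < p) (Hq : 0 < q) (Hn : 0 < INR N).

Local Notation n := (INR N).

Lemma sqrt_beta_mul_N : sqrt (beta N (p ^ 2) (q ^ 2) * n) = p / q.
Proof.
  unfold beta.
  replace (p ^ 2 / (n * q ^ 2) * n) with ((p / q) ^ 2) by (field; repeat split; lra).
  apply sqrt_pow2, Rlt_le, Rdiv_lt_0_compat; lra.
Qed.

Lemma sqrt_beta : sqrt (beta N (p ^ 2) (q ^ 2)) = p / (sqrt n * q).
Proof.
  unfold beta.
  replace (p ^ 2 / (n * q ^ 2)) with ((p / q) ^ 2 / n) by (field; repeat split; lra).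
  rewrite sqrt_div_alt by lra.
  rewrite sqrt_pow2 by (apply Rlt_le, Rdiv_lt_0_compat; lra).
  field. split; [lra|]. apply Rgt_not_eq, sqrt_lt_R0; lra.
Qed.

Lemma case1_iff : case1 N lam mu (p ^ 2) (q ^ 2) <-> lam * mu <= n * q * (q - p).
Proof.
  unfold case1. rewrite sqrt_beta_mul_N.
  replace (q ^ 2 * n / (lam * mu) * (1 - p / q)) with (n * q * (q - p) / (lam * mu))
    by (field; repeat split; lra).
  pose proof (Rmult_lt_0_compat lam mu Hlam Hmu) as Hlm.
  split; intro H.
  - apply Rge_le, (Rmult_le_compat_r (lam * mu)) in H; [|lra].
    replace (n * q * (q - p) / (lam * mu) * (lam * mu)) with (n * q * (q - p)) in H
      by (field; repeat split; lra). lra.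
  - apply Rle_ge, (Rmult_le_reg_r (lam * mu)); [lra|].
    replace (n * q * (q - p) / (lam * mu) * (lam * mu)) with (n * q * (q - p))
      by (field; repeat split; lra). lra.
Qed.

Local Notation S := (p ^ 2 + n * q ^ 2 - lam * mu).

Lemma Dmin_case2_eq : 0 < S ->
  Dmin_case2 N lam mu (p ^ 2) (q ^ 2) = ((p + n * q) ^ 2 / S - 1 - n) / lam.
Proof.
  intros HS. unfold Dmin_case2. rewrite sqrt_beta_mul_N. unfold beta.
  field. repeat split; lra.
Qed.

Lemma alpha_opt_case2_eq :
  alpha_opt_case2 N lam mu (p ^ 2) (q ^ 2)
  = p * (lam * mu + n * p * q - n * q ^ 2) / (lam * mu * (p + n * q)).
Proof.
  unfold alpha_opt_case2. rewrite sqrt_beta_mul_N, sqrt_beta.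
  assert (Hr : 0 < sqrt n) by (apply sqrt_lt_R0; lra).
  assert (Er : sqrt n * sqrt n = n) by (apply sqrt_sqrt; lra).
  set (r := sqrt n) in *. clearbody r.
  rewrite <- Er. field. repeat split; nra.
Qed.

Lemma margins_alpha_opt_case2 :
  wifi_margin lam mu (p ^ 2) (alpha_opt_case2 N lam mu (p ^ 2) (q ^ 2)) = p * S / (p + n * q)
  /\ vlc_margin N lam mu (q ^ 2) (alpha_opt_case2 N lam mu (p ^ 2) (q ^ 2)) = q * S / (p + n * q).
Proof.
  rewrite alpha_opt_case2_eq. unfold wifi_margin, vlc_margin.
  split; field; repeat split; nra.
Qed.

Lemma min_case1 : lam * mu <= n * q * (q - p) ->
  is_min_at N lam mu (p ^ 2) (q ^ 2) 0 (Dmin_case1 N lam mu (p ^ 2) (q ^ 2)).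
Proof.
  intros Hc.
  pose proof (Rmult_lt_0_compat lam mu Hlam Hmu) as Hlm.
  set (V0 := vlc_margin N lam mu (q ^ 2) 0).
  assert (EV0 : V0 = q ^ 2 - lam * mu / n) by (unfold V0, vlc_margin; field; lra).
  assert (HpV0 : p * q <= V0).
  { rewrite EV0.
    replace (q ^ 2 - lam * mu / n) with (p * q + (n * q * (q - p) - lam * mu) / n)
      by (field; lra).
    assert (0 <= (n * q * (q - p) - lam * mu) / n).
    { apply Rmult_le_pos; [lra | apply Rlt_le, Rinv_0_lt_compat; lra]. }
    lra. }
  assert (HV0 : 0 < V0) by nra.
  assert (EU0 : wifi_margin lam mu (p ^ 2) 0 = p ^ 2) by (unfold wifi_margin; ring).
  assert (ED0 : D N lam mu (p ^ 2) (q ^ 2) 0 = Dmin_case1 N lam mu (p ^ 2) (q ^ 2)).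
  { assert (Hden : 0 < q ^ 2 * n - lam * mu).
    { replace (q ^ 2 * n - lam * mu) with (V0 * n) by (rewrite EV0; field; lra). nra. }
    unfold D, Dmin_case1. field. repeat split; nra. }
  split; [| split; [exact ED0 |]].
  - apply feasible_iff_margins; try lra. rewrite EU0. fold V0.
    assert (0 < lam * mu / n) by (apply Rdiv_lt_0_compat; lra).
    nra.
  - intros x Hx. rewrite <- ED0.
    apply feasible_iff_margins in Hx as [[HU HUp] [HV HVq]]; try lra.
    assert (HU0 : wifi_margin lam mu (p ^ 2) 0 <> 0) by (rewrite EU0; nra).
    rewrite !D_margins by (fold V0; lra). rewrite EU0. fold V0.
    apply Rmult_le_compat_r; [apply Rlt_le, Rinv_0_lt_compat; lra |].
    assert (Hline := margins_sum N lam mu (p ^ 2) (q ^ 2) x Hn).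
    rewrite <- (margins_sum N lam mu (p ^ 2) (q ^ 2) 0 Hn), EU0 in Hline. fold V0 in Hline.
    pose proof (engel_sum_decreasing n p q _ _ (p ^ 2) V0 Hn ltac:(lra) ltac:(lra)
                  HU HV0 HUp Hline ltac:(nra)).
    lra.
Qed.

Lemma min_case2 : p < q -> lam * mu < p ^ 2 + n * q ^ 2 -> n * q * (q - p) <= lam * mu ->
  is_min_at N lam mu (p ^ 2) (q ^ 2) (alpha_opt_case2 N lam mu (p ^ 2) (q ^ 2))
    (Dmin_case2 N lam mu (p ^ 2) (q ^ 2)).
Proof.
  intros Hpq HS Hc.
  assert (HS0 : 0 < S) by lra.
  assert (Hpnq : 0 < p + n * q) by nra.
  destruct margins_alpha_opt_case2 as [EU EV].
  set (a_opt := alpha_opt_case2 N lam mu (p ^ 2) (q ^ 2)) in *.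
  assert (HU : 0 < p * S / (p + n * q)) by (apply Rdiv_lt_0_compat; nra).
  assert (HV : 0 < q * S / (p + n * q)) by (apply Rdiv_lt_0_compat; nra).
  rewrite Dmin_case2_eq by exact HS0.
  split; [| split].
  - assert (HUle : p * S / (p + n * q) <= p ^ 2).
    { apply (Rmult_le_reg_r (p + n * q)); [lra |].
      replace (p * S / (p + n * q) * (p + n * q)) with (p * S) by (field; lra). nra. }
    assert (HVle : q * S / (p + n * q) <= q ^ 2).
    { apply (Rmult_le_reg_r (p + n * q)); [lra |].
      replace (q * S / (p + n * q) * (p + n * q)) with (q * S) by (field; lra).
      assert (p * (p - q) - lam * mu < 0) by nra.
      nra. }
    apply feasible_iff_margins; try lra.
  - rewrite D_margins, EU, EV by lra. field. repeat split; lra.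
  - intros x Hx.
    apply feasible_iff_margins in Hx as [[HUx _] [HVx _]]; try lra.
    rewrite D_margins by lra.
    apply Rmult_le_compat_r; [apply Rlt_le, Rinv_0_lt_compat; lra |].
    pose proof (cauchy_schwarz_engel n p q _ _ Hn HUx HVx) as Hcs.
    rewrite (margins_sum N lam mu (p ^ 2) (q ^ 2) x Hn) in Hcs.
    lra.
Qed.

End SquareCapacities.

Lemma pos_is_square (x : R) : 0 < x -> exists p, 0 < p /\ x = p ^ 2.
Proof.
  intros Hx. exists (sqrt x).
  split; [apply sqrt_lt_R0 | symmetry; apply pow2_sqrt]; lra.
Qed.

Theorem theorem1 (N : nat) (lam mu B1 B2 : R)
  (HN : (1 <= N)%nat) (Hlam : 0 < lam) (Hmu : 0 < mu) (HB1 : 0 < B1) (HB2 : 0 < B2)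
  (HB12 : B1 < B2) (Hload : lam * mu < B1 + INR N * B2) :
  (case1 N lam mu B1 B2 ->
     is_min_at N lam mu B1 B2 0 (Dmin_case1 N lam mu B1 B2)) /\
  (~ case1 N lam mu B1 B2 ->
     is_min_at N lam mu B1 B2 (alpha_opt_case2 N lam mu B1 B2) (Dmin_case2 N lam mu B1 B2)).
Proof.
  assert (Hn : 0 < INR N) by (apply lt_0_INR, HN).
  destruct (pos_is_square B1 HB1) as [p [Hp ->]].
  destruct (pos_is_square B2 HB2) as [q [Hq ->]].
  assert (Hpq : p < q) by nra.
  split; intros Hc.
  - apply min_case1; try lra.
    apply case1_iff; assumption.
  - apply min_case2; try lra.
    apply Rlt_le, Rnot_le_lt. intro Hle.
    apply Hc, case1_iff; assumption.
Qed.
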